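(* Let $V=\{1,\dots,n\}$ be partitioned into $P_1,\dots,P_J$. For each realization $z$ let $r_{i,z}\in[0,1]$, $i\in V$, with $\sum_{i}r_{i,z}=1$, and let $f_z(\mathbf{x})=\sum_{j=1}^J h\big(\sum_{i\in P_j}r_{i,z}x_i\big)$ for $\mathbf{x}\in\{0,1\}^n$, with $h(s)=\log(1+s)$. Let $\hat h^L(s)=\sum_{\ell=0}^L\frac{h^{(\ell)}(1/2)}{\ell!}(s-1/2)^\ell$ and $\hat f_z^L(\mathbf{x})=\sum_{j=1}^J\hat h^L\big(\sum_{i\in P_j}r_{i,z}x_i\big)$. Let $G_z$ be the multilinear relaxation of $f_z$ and $\widehat{\nabla G_z^L}$ the polynomial estimator built from $\hat f_z^L$. Then for all $\mathbf{y}\in[0,1]^n$, $$\big\|\nabla G_z(\mathbf{y})-\widehat{\nabla G_z^L}(\mathbf{y})\big\|_2\le\frac{\sqrt n}{(L+1)2^L}.$$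
   Context: $G_z(\mathbf{y})=\mathbb{E}_{\mathbf{x}\sim\mathbf{y}}[f_z(\mathbf{x})]$ where $\mathbf{x}\sim\mathbf{y}$ has independent Bernoulli$(y_i)$ coordinates. For a polynomial $p(\mathbf{y})=c_0+\sum_\ell c_\ell\prod_{i\in J_\ell}y_i^{k_i^\ell}$ ($k_i^\ell\ge1$), its multilinearization is $\dot p(\mathbf{y})=c_0+\sum_\ell c_\ell\prod_{i\in J_\ell}y_i$. The polynomial estimator is $\big(\widehat{\nabla G_z^L}(\mathbf{y})\big)_i=\dot{\hat f}{}_z^L([\mathbf{y}]_{+i})-\dot{\hat f}{}_z^L([\mathbf{y}]_{-i})$, where $[\mathbf{y}]_{+i}$, $[\mathbf{y}]_{-i}$ denote $\mathbf{y}$ with coordinate $i$ set to $1$, $0$. *)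

From HB Require Import structures.
From mathcomp Require Import all_boot all_order all_algebra.
From mathcomp Require Import mpoly.
From mathcomp Require Import all_classical all_reals all_analysis.
Set Implicit Arguments. Unset Strict Implicit. Unset Printing Implicit Defensive.
Import Order.TTheory GRing.Theory Num.Theory.
Import numFieldNormedType.Exports.
Local Open Scope ring_scope.

Section Defs.
Variable R : realType.

Definition h (s : R) : R := ln (1 + s).

Definition hcoef (l : nat) : R := derive1n l h (2^-1) / (l`!)%:R.

Definition hhat (L : nat) (s : R) : R :=
  \sum_(l < L.+1) hcoef l * (s - 2^-1) ^+ l.

Variables (n J : nat).
(* the partition V = P_1 ∪ ... ∪ P_J is given by the block map blk : i |-> j with i ∈ P_j *)
Variable blk : 'I_n -> 'I_J.
(* weights r_{i,z} for the fixed realization z *)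
Variable r : 'I_n -> R.

Definition fz (x : {ffun 'I_n -> bool}) : R :=
  \sum_(j < J) h (\sum_(i < n | blk i == j) r i * (x i)%:R).

(* multilinear relaxation G_z(y) = E_{x ~ y}[f_z(x)], x_i ~ Bernoulli(y_i) independent *)
Definition Gz (y : 'rV[R]_n) : R :=
  \sum_(x : {ffun 'I_n -> bool})
     (\prod_(i < n) (if x i then y 0 i else 1 - y 0 i)) * fz x.

Definition gradGz (y : 'rV[R]_n) (i : 'I_n) : R := derive Gz y (delta_mx 0 i).

Definition fhat_poly (L : nat) : mpoly.mpoly n R :=
  \sum_(j < J) \sum_(l < L.+1)
     hcoef l *: (\sum_(i < n | blk i == j) r i *: mpoly.mpolyX R (mpoly.mnm1 i)
                 - mpoly.mpolyC n (2^-1)) ^+ l.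

Definition mlin_mnm (m : mpoly.multinom n) : mpoly.multinom n :=
  mpoly.Multinom [tuple minn (mpoly.fun_of_multinom m i) 1 | i < n].

Definition multilinearize (p : mpoly.mpoly n R) : mpoly.mpoly n R :=
  \sum_(m <- mpoly.msupp p) mpoly.mcoeff m p *: mpoly.mpolyX R (mlin_mnm m).

Definition set_coord (y : 'rV[R]_n) (i : 'I_n) (b : R) : 'I_n -> R :=
  fun k => if k == i then b else y 0 k.

Definition gradGz_hat (L : nat) (y : 'rV[R]_n) (i : 'I_n) : R :=
  mpoly.meval (set_coord y i 1) (multilinearize (fhat_poly L))
  - mpoly.meval (set_coord y i 0) (multilinearize (fhat_poly L)).

End Defs.

(* G_z is multilinear, so its i-th partial derivative is G_z([y]_{+i}) - G_z([y]_{-i}); and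
   since b ^+ k = b for b in {0, 1}, evaluating a multilinearized polynomial at y is taking its
   mean under x ~ y.  Each coordinate of the error is therefore E_{[y]_{+i}} e - E_{[y]_{-i}} e
   with e = f_z - \hat f_z^L.  Coupling x with x toggled at i, only the block of i changes, so
   the coordinate is at most twice sup_{[0,1]} |h - \hat h^L|.  The derivative of h - \hat h^L
   is (1/2 - s)^L / ((3/2)^L (1 + s)) (a geometric sum), at most |s - 1/2|^L on [0, 1], whence
   |h - \hat h^L| <= 2^-(L+1) / (L+1) there. *)

From mathcomp Require Import all_boot all_order all_algebra.
From mathcomp Require Import mpoly.
From mathcomp Require Import all_classical all_reals all_analysis.
From mathcomp Require Import ring lra.
Import Order.TTheory GRing.Theory Num.Theory.
Import numFieldNormedType.Exports.
Local Open Scope classical_set_scope.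
Local Open Scope ring_scope.
Set Implicit Arguments. Unset Strict Implicit.

Section BernoulliMean.
Variables (R : comRingType) (n : nat).
Implicit Types (y : 'I_n -> R) (x : {ffun 'I_n -> bool}) (F : {ffun 'I_n -> bool} -> R).

Definition bern_weight y x : R := \prod_(k < n) (if x k then y k else 1 - y k).

Definition bern_mean y F : R := \sum_x bern_weight y x * F x.

Definition upd y (i : 'I_n) (b : R) : 'I_n -> R := fun k => if k == i then b else y k.

Definition toggle (i : 'I_n) x : {ffun 'I_n -> bool} :=
  [ffun k => if k == i then ~~ x k else x k].

Lemma toggleK i : involutive (toggle i).
Proof. by move=> x; apply/ffunP => k; rewrite !ffunE; case: eqP => // ->; rewrite negbK. Qed.

Lemma bern_weight_upd y i b x : bern_weight (upd y i b) x =
  (if x i then b else 1 - b) * \prod_(k < n | k != i) (if x k then y k else 1 - y k).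
Proof.
rewrite /bern_weight (bigD1 i) //= /upd eqxx; congr (_ * _).
by apply: eq_bigr => k /negbTE ->.
Qed.

Lemma bern_mean_split y i F :
  bern_mean y F = y i * bern_mean (upd y i 1) F + (1 - y i) * bern_mean (upd y i 0) F.
Proof.
rewrite /bern_mean !mulr_sumr -big_split /=; apply: eq_bigr => x _.
rewrite !bern_weight_upd /bern_weight (bigD1 i) //=.
by case: (x i); ring.
Qed.

Lemma bern_mean_toggle y i F :
  bern_mean (upd y i 0) F = bern_mean (upd y i 1) (F \o toggle i).
Proof.
rewrite /bern_mean (reindex_inj (can_inj (toggleK i))) /=; apply: eq_bigr => x _.
rewrite !bern_weight_upd ffunE eqxx; congr (_ * _ * _).
  by case: (x i); rewrite /= ?subrr ?subr0.
by apply: eq_bigr => k /negbTE ki; rewrite ffunE ki.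
Qed.

Lemma bern_meanB y F G :
  bern_mean y (fun x => F x - G x) = bern_mean y F - bern_mean y G.
Proof. by rewrite /bern_mean -sumrB; apply: eq_bigr => x _; rewrite mulrBr. Qed.

Lemma bern_mean_monomial y (m : 'I_n -> nat) :
  bern_mean y (fun x => \prod_(k < n) (x k)%:R ^+ m k) = \prod_(k < n) y k ^+ minn (m k) 1.
Proof.
have -> : \prod_(k < n) y k ^+ minn (m k) 1 =
    \prod_(k < n) \sum_(b : bool) (if b then y k else 1 - y k) * b%:R ^+ m k.
  apply: eq_bigr => k _; rewrite big_bool /=.
  case: (m k) => [|mk]; first by rewrite !expr0; ring.
  by rewrite expr0n /= mulr0 addr0 expr1n mulr1 expr1.
rewrite bigA_distr_bigA /=; apply: eq_bigr => x _.
by rewrite /bern_weight -big_split.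
Qed.

Lemma bern_weight_sum y : \sum_x bern_weight y x = 1.
Proof.
have := bern_mean_monomial y (fun _ => 0%N).
rewrite /bern_mean [RHS]big1 // => <-.
by apply: eq_bigr => x _; rewrite big1 ?mulr1.
Qed.

End BernoulliMean.

Section BernoulliMeanBound.
Variables (R : numDomainType) (n : nat).
Implicit Types (y : 'I_n -> R) (x : {ffun 'I_n -> bool}) (F : {ffun 'I_n -> bool} -> R).

Lemma bern_weight_ge0 y x : (forall k, 0 <= y k <= 1) -> 0 <= bern_weight y x.
Proof.
move=> y01; apply: prodr_ge0 => k _.
by case/andP: (y01 k) => y0 y1; case: (x k); rewrite ?subr_ge0.
Qed.

Lemma ler_norm_bern_mean y F (B : R) :
  (forall k, 0 <= y k <= 1) -> (forall x, `|F x| <= B) -> `|bern_mean y F| <= B.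
Proof.
move=> y01 FB; rewrite -[B]mul1r -(bern_weight_sum y) mulr_suml.
apply: (le_trans (ler_norm_sum _ _ _)); apply: ler_sum => x _.
by rewrite normrM ger0_norm ?bern_weight_ge0 // ler_wpM2l ?bern_weight_ge0.
Qed.

Lemma ler_norm_bern_mean_upd_diff y i F (B : R) :
  (forall k, 0 <= y k <= 1) -> (forall x, `|F x - F (toggle i x)| <= B) ->
  `|bern_mean (upd y i 1) F - bern_mean (upd y i 0) F| <= B.
Proof.
move=> y01 FB; rewrite bern_mean_toggle -bern_meanB.
apply: ler_norm_bern_mean => // k; rewrite /upd; case: eqP => _ //.
by rewrite lexx ler01.
Qed.

End BernoulliMeanBound.

Section Multilinear.
Variables (R : realType) (n : nat).

Lemma meval_multilinearize (p : {mpoly R[n]}) (y : 'I_n -> R) :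
  meval y (multilinearize p) = bern_mean y (fun x => meval (fun k => (x k)%:R) p).
Proof.
rewrite /multilinearize raddf_sum /bern_mean /=.
under eq_bigr do rewrite mevalZ mevalX.
under [RHS]eq_bigr do rewrite mevalE mulr_sumr.
rewrite exchange_big /=; apply: eq_bigr => m _.
under [RHS]eq_bigr do rewrite mulrCA.
rewrite -mulr_sumr; congr (_ * _).
rewrite -/(bern_mean y _) bern_mean_monomial; apply: eq_bigr => k _.
by rewrite /mlin_mnm mnmE.
Qed.

Lemma derive_bern_mean (F : {ffun 'I_n -> bool} -> R) (y : 'rV[R]_n) (i : 'I_n) :
  derive (fun z : 'rV[R]_n => bern_mean (fun k => z 0 k) F) y (delta_mx 0 i) =
  bern_mean (upd (fun k => y 0 k) i 1) F - bern_mean (upd (fun k => y 0 k) i 0) F.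
Proof.
have upd_shift t b : upd (fun k => (t *: delta_mx 0 i + y) 0 k) i b = upd (fun k => y 0 k) i b.
  apply/funext => k; rewrite /upd; case: eqP => // /eqP ki.
  by rewrite !mxE (negbTE ki) andbF mulr0 add0r.
rewrite /derive; apply: lim_near_cst; first exact: norm_hausdorff.
near=> t.
have t0 : t != 0 by near: t; exact: nbhs_dnbhs_neq.
rewrite /= (bern_mean_split _ i) [bern_mean (fun k => y 0 k) _](bern_mean_split _ i).
rewrite !upd_shift !mxE !eqxx /= mulr1.
set A := bern_mean _ _; set B := bern_mean _ _.
by rewrite /GRing.scale /=; field.
Unshelve. all: end_near.
Qed.

End Multilinear.

Section DerivativeComparison.
Variable R : realType.

Lemma ler_norm_subr_derive (f g df dg : R -> R) (a b : R) : a <= b ->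
  (forall x, x \in `[a, b] -> is_derive x 1 f (df x)) ->
  (forall x, x \in `[a, b] -> is_derive x 1 g (dg x)) ->
  (forall x, x \in `[a, b] -> `|df x| <= dg x) ->
  `|f b - f a| <= g b - g a.
Proof.
move=> ab fd gd dfg.
have ndecr (k dk : R -> R) : (forall x, x \in `[a, b] -> is_derive x 1 k (dk x)) ->
    (forall x, x \in `[a, b] -> 0 <= dk x) -> k a <= k b.
  move=> kd dk0.
  have kc : {within `[a, b], continuous k}.
    by apply: derivable_within_continuous => x /kd.
  have [c cab kab] := MVT_segment ab (fun x xab => kd x (subset_itv_oo_cc xab)) kc.
  by rewrite -subr_ge0 kab mulr_ge0 ?dk0 ?subr_ge0.
have dgDf x : x \in `[a, b] -> 0 <= dg x + df x.
  by move/dfg; rewrite ler_norml => /andP[? ?]; lra.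
have dgBf x : x \in `[a, b] -> 0 <= dg x - df x.
  by move/dfg; rewrite ler_norml => /andP[? ?]; lra.
have := ndecr _ _ (fun x xab => is_deriveD (gd x xab) (fd x xab)) dgDf.
have := ndecr _ _ (fun x xab => is_deriveB (gd x xab) (fd x xab)) dgBf.
rewrite !fctE ler_norml => ? ?; apply/andP; split; lra.
Qed.

End DerivativeComparison.

Section PowerBound.
Variable R : realType.

Lemma is_derive_scaled_pow (k c x : R) (L : nat) :
  is_derive x 1 (fun u => k * (u - c) ^+ L.+1 / L.+1%:R) (k * (x - c) ^+ L).
Proof.
have := is_deriveZ (k / L.+1%:R) (is_deriveX L.+1 (is_derive_shift x 1 (- c))).
have -> : k / L.+1%:R \*: shift (- c) ^+ L.+1 = (fun u => k * (u - c) ^+ L.+1 / L.+1%:R).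
  by apply/funext => u; rewrite /= exprfctE /= mulrAC.
move=> d; apply: is_derive_eq d _; rewrite /GRing.scale /= mulr1 /=.
by rewrite mulrA divfK // pnatr_eq0.
Qed.

Lemma ler_norm_derive_pow (f df : R -> R) (a b c : R) (L : nat) :
  (forall x, x \in `[a, b] -> is_derive x 1 f (df x)) ->
  (forall x, x \in `[a, b] -> `|df x| <= `|x - c| ^+ L) ->
  c \in `[a, b] -> f c = 0 ->
  forall s, s \in `[a, b] -> `|f s| <= `|s - c| ^+ L.+1 / L.+1%:R.
Proof.
move=> fd dfB cab fc0 s sab.
have sub u v x : u \in `[a, b] -> v \in `[a, b] -> x \in `[u, v] -> x \in `[a, b].
  by rewrite !in_itv /= => /andP[? ?] /andP[? ?] /andP[? ?]; apply/andP; split; lra.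
have [cs|sc] := lerP c s.
- have dB x : x \in `[c, s] -> `|df x| <= 1 * (x - c) ^+ L.
    move=> xcs; rewrite mul1r -[x - c]ger0_norm ?dfB ?(sub _ _ _ cab sab xcs) //.
    by move: xcs; rewrite in_itv /= subr_ge0 => /andP[].
  have := ler_norm_subr_derive cs (fun x xcs => fd x (sub _ _ _ cab sab xcs))
    (fun x _ => is_derive_scaled_pow 1 c x L) dB.
  by rewrite fc0 subr0 subrr expr0n /= !mul1r mul0r subr0.
- (* Left of c, compare with (-1)^L (u - c)^(L+1) / (L+1), whose derivative is |u - c|^L. *)
  have dB x : x \in `[s, c] -> `|df x| <= (-1) ^+ L * (x - c) ^+ L.
    move=> xsc; rewrite -exprMn mulN1r opprB -[c - x]ger0_norm.
      by rewrite distrC dfB ?(sub _ _ _ sab cab xsc).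
    by move: xsc; rewrite in_itv /= subr_ge0 => /andP[].
  have := ler_norm_subr_derive (ltW sc) (fun x xsc => fd x (sub _ _ _ sab cab xsc))
    (fun x _ => is_derive_scaled_pow ((-1) ^+ L) c x L) dB.
  rewrite fc0 sub0r normrN subrr expr0n /= mulr0 mul0r sub0r.
  have -> : (c - s) ^+ L.+1 = (-1) ^+ L.+1 * (s - c) ^+ L.+1.
    by rewrite -exprMn mulN1r opprB.
  by move/le_trans; apply; rewrite [(-1) ^+ L.+1]exprS mulN1r !mulNr.
Qed.

End PowerBound.

Section LogTaylor.
Variable R : realType.
Local Notation h := (@h R).
Local Notation hcoef := (@hcoef R).

Lemma is_derive_addl (a x : R) : is_derive x 1 (+%R a) 1.
Proof.
rewrite (_ : +%R a = shift a); first exact: is_derive_shift.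
by apply/funext => s /=; rewrite addrC.
Qed.

Lemma is_derive_h (x : R) : -1 < x -> is_derive x 1 h (1 + x)^-1.
Proof.
move=> x1; have x0 : 0 < 1 + x by rewrite -ltrBlDl sub0r.
by have := is_derive1_comp (is_derive1_ln x0) (is_derive_addl 1 x); rewrite mulr1.
Qed.

Lemma is_derive_inv_pow_addl (a x : R) (k : nat) : a + x != 0 ->
  is_derive x 1 (fun s => ((a + s) ^+ k.+1)^-1) (- k.+1%:R / (a + x) ^+ k.+2).
Proof.
move=> ax0; have axk : (a + x) ^+ k != 0 by rewrite expf_neq0.
have := is_deriveX k.+1 (is_derive_addl a x); rewrite exprfctE => dX.
have axk1 : (a + x) ^+ k.+1 != 0 by rewrite expf_neq0.
apply: is_derive_eq (@is_deriveV R (fun s => (a + s) ^+ k.+1) x _ 1 axk1 dX) _.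
rewrite /GRing.scale /= mulr1 !exprS.
by field; rewrite ax0 axk.
Qed.

Lemma derive1n_h (l : nat) (x : R) : -1 < x ->
  derive1n l.+1 h x = (-1) ^+ l * l`!%:R / (1 + x) ^+ l.+1.
Proof.
elim: l x => [|l IHl] x x1.
  by rewrite derive1n1 derive1E; case: (is_derive_h x1) => _ ->; rewrite expr0 expr1 !mul1r.
have x0 : 1 + x != 0 by rewrite gt_eqF // -ltrBlDl sub0r.
rewrite derive1nS derive1E.
have -> : 'D_1 (derive1n l.+1 h) x =
    'D_1 (fun s : R => (-1) ^+ l * l`!%:R * ((1 + s) ^+ l.+1)^-1) x.
  by apply: near_eq_derive; near=> s; apply: IHl; near: s; exact: lt_nbhsr.
case: (is_deriveZ ((-1) ^+ l * l`!%:R) (is_derive_inv_pow_addl l x0)) => _ ->.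
rewrite /GRing.scale /= factS natrM [(-1) ^+ l.+1]exprS; ring.
Unshelve. all: end_near.
Qed.

Let three_halves_neq0 : 1 + 2^-1 != 0 :> R.
Proof. by rewrite gt_eqF //; lra. Qed.

Lemma hcoef0 : hcoef 0 = h (2^-1).
Proof. by rewrite /hcoef /= divr1. Qed.

Lemma hcoefS (l : nat) : hcoef l.+1 = (-1) ^+ l / (1 + 2^-1) ^+ l.+1 / l.+1%:R.
Proof.
have x1 : (-1 : R) < 2^-1 by rewrite (@lt_trans _ _ 0) ?invr_gt0.
rewrite /hcoef derive1n_h // factS natrM.
by field; rewrite nat1r expf_neq0 ?three_halves_neq0 // !pnatr_eq0 -!lt0n fact_gt0.
Qed.

Lemma hhat_half (L : nat) : hhat L (2^-1) = h (2^-1).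
Proof.
rewrite /hhat big_ord_recl subrr expr0 mulr1 hcoef0 big1 ?addr0 // => l _.
by rewrite expr0n /= mulr0.
Qed.

Lemma is_derive_h_sub_hhat (L : nat) (x : R) : -1 < x ->
  is_derive x 1 (fun s => h s - hhat L s) ((2^-1 - x) ^+ L / ((1 + 2^-1) ^+ L * (1 + x))).
Proof.
move=> x1; have x0 : 1 + x != 0 by rewrite gt_eqF // -ltrBlDl sub0r.
elim: L => [|L IHL].
  have := is_deriveB (is_derive_h x1) (is_derive_cst (hcoef 0) x 1).
  rewrite (_ : h - cst (hcoef 0) = fun s => h s - hhat 0 s); last first.
    by apply/funext => s; rewrite /hhat big_ord1 expr0 mulr1.
  by move=> d; apply: is_derive_eq d _; rewrite subr0 !expr0 !mul1r.
have := is_deriveB IHL (is_derive_scaled_pow ((-1) ^+ L / (1 + 2^-1) ^+ L.+1) (2^-1) x L).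
rewrite (_ : _ - _ = fun s => h s - hhat L.+1 s); last first.
  apply/funext => s; rewrite /hhat big_ord_recr /= hcoefS.
  by rewrite opprD addrA mulrAC.
move=> d; apply: is_derive_eq d _.
rewrite mulrAC -exprMn mulN1r opprB !exprS.
by field; rewrite x0 expf_neq0 ?three_halves_neq0.
Qed.

Lemma ler_norm_h_sub_hhat (L : nat) (s : R) : 0 <= s <= 1 ->
  `|h s - hhat L s| <= (2^-1) ^+ L.+1 / L.+1%:R.
Proof.
move=> s01.
have itv01 (x : R) : (x \in `[0, 1]) = (0 <= x <= 1) by rewrite in_itv.
have dB (x : R) : x \in `[0, 1] ->
    `|(2^-1 - x) ^+ L / ((1 + 2^-1) ^+ L * (1 + x))| <= `|x - 2^-1| ^+ L.
  rewrite itv01 => /andP[x0 _].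
  have A1 : 1 <= (1 + 2^-1) ^+ L * (1 + x).
    by apply: mulr_ege1; [apply: exprn_ege1 |]; rewrite lerDl ?invr_ge0.
  rewrite normrM normfV normrX distrC (ger0_norm (le_trans ler01 A1)).
  by rewrite ler_pdivrMr ?ler_peMr ?exprn_ge0 // (lt_le_trans ltr01 A1).
have fd (x : R) : x \in `[0, 1] ->
    is_derive x 1 (fun s => h s - hhat L s) ((2^-1 - x) ^+ L / ((1 + 2^-1) ^+ L * (1 + x))).
  by rewrite itv01 => /andP[x0 _]; apply: is_derive_h_sub_hhat; lra.
have half01 : (2^-1 : R) \in `[0, 1] by rewrite itv01; apply/andP; split; lra.
apply: le_trans (ler_norm_derive_pow fd dB half01 _ _) _.
- by rewrite hhat_half subrr.
- by rewrite itv01.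
rewrite ler_pM2r ?invr_gt0 ?ltr0n // lerXn2r ?nnegrE // ler_norml.
by case/andP: s01 => ? ?; apply/andP; split; lra.
Qed.

End LogTaylor.

Lemma ler_sqrt_sum_sqr (R : rcfType) (n : nat) (v : 'I_n -> R) (c : R) :
  0 <= c -> (forall i, `|v i| <= c) -> Num.sqrt (\sum_(i < n) v i ^+ 2) <= Num.sqrt n%:R * c.
Proof.
move=> c0 vc; apply: (@le_trans _ _ (Num.sqrt (\sum_(i < n) c ^+ 2))).
  rewrite ler_sqrt ?sumr_ge0 // => [|i _]; last by rewrite sqr_ge0.
  apply: ler_sum => i _; rewrite -real_normK ?num_real //.
  by rewrite lerXn2r ?nnegrE ?normr_ge0.
by rewrite sumr_const card_ord -[c ^+ 2 *+ n]mulr_natl sqrtrM ?ler0n // sqrtr_sqr ger0_norm.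
Qed.

Section Estimator.
Variables (R : realType) (n J : nat) (blk : 'I_n -> 'I_J) (r : 'I_n -> R).
Hypotheses (r01 : forall i, 0 <= r i <= 1) (r_sum : \sum_(i < n) r i = 1).
Implicit Types (x : {ffun 'I_n -> bool}) (y : 'rV[R]_n).

Definition blk_sum (j : 'I_J) x : R := \sum_(i < n | blk i == j) r i * (x i)%:R.

Lemma blk_sum_itv j x : 0 <= blk_sum j x <= 1.
Proof.
apply/andP; split.
  by apply: sumr_ge0 => i _; rewrite mulr_ge0 ?ler0n //; case/andP: (r01 i).
rewrite -[X in _ <= X]r_sum /blk_sum big_mkcond /=; apply: ler_sum => i _.
have /andP[r0 r1] := r01 i.
by case: (blk i == j); case: (x i); rewrite ?mulr1 ?mulr0.
Qed.

Lemma blk_sum_toggle i j x : blk i != j -> blk_sum j (toggle i x) = blk_sum j x.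
Proof.
move=> bij; apply: eq_bigr => k /eqP bkj; rewrite ffunE.
by case: eqP => // ki; move: bij; rewrite -ki bkj eqxx.
Qed.

Lemma meval_fhat_poly (L : nat) x :
  meval (fun k => (x k)%:R) (fhat_poly blk r L) = \sum_(j < J) hhat L (blk_sum j x).
Proof.
rewrite /fhat_poly raddf_sum /=; apply: eq_bigr => j _.
rewrite raddf_sum /=; apply: eq_bigr => l _.
rewrite mevalZ rmorphXn /= mevalB mevalC raddf_sum /=; congr (_ * (_ - _) ^+ _).
by apply: eq_bigr => i _; rewrite mevalZ mevalXU.
Qed.

Lemma gradGzE y i : gradGz blk r y i =
  bern_mean (upd (fun k => y 0 k) i 1) (fz blk r) - bern_mean (upd (fun k => y 0 k) i 0) (fz blk r).
Proof. exact: derive_bern_mean. Qed.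

Lemma gradGz_hatE (L : nat) y i : gradGz_hat blk r L y i =
  bern_mean (upd (fun k => y 0 k) i 1) (fun x => \sum_(j < J) hhat L (blk_sum j x))
  - bern_mean (upd (fun k => y 0 k) i 0) (fun x => \sum_(j < J) hhat L (blk_sum j x)).
Proof.
rewrite /gradGz_hat !meval_multilinearize.
by congr (_ - _); apply: eq_bigr => x _; rewrite meval_fhat_poly.
Qed.

Definition taylor_err (L : nat) x : R := fz blk r x - \sum_(j < J) hhat L (blk_sum j x).

(* Toggling x_i only moves the block sum of blk i, and both of its values lie in [0, 1]. *)
Lemma ler_norm_taylor_err_toggle (L : nat) i x :
  `|taylor_err L x - taylor_err L (toggle i x)| <= ((L.+1)%:R * 2 ^+ L)^-1.
Proof.
rewrite /taylor_err /fz -!sumrB (bigD1 (blk i)) //= [X in _ + X]big1 ?addr0; last first.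
  move=> j; rewrite eq_sym => /(blk_sum_toggle x).
  by rewrite /blk_sum => ->; rewrite subrr.
apply: (le_trans (ler_normB _ _)).
have -> : ((L.+1)%:R * 2 ^+ L)^-1 = (2^-1) ^+ L.+1 / L.+1%:R + (2^-1) ^+ L.+1 / L.+1%:R :> R.
  by rewrite exprS exprVn; field; rewrite nat1r pnatr_eq0 expf_neq0.
exact: lerD (ler_norm_h_sub_hhat L (blk_sum_itv _ _)) (ler_norm_h_sub_hhat L (blk_sum_itv _ _)).
Qed.

Lemma ler_norm_gradGz_sub_hat (L : nat) y i : (forall k, 0 <= y 0 k <= 1) ->
  `|gradGz blk r y i - gradGz_hat blk r L y i| <= ((L.+1)%:R * 2 ^+ L)^-1.
Proof.
move=> y01; rewrite gradGzE gradGz_hatE opprD addrACA -opprD -!bern_meanB.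
exact: ler_norm_bern_mean_upd_diff (fun x => ler_norm_taylor_err_toggle L i x).
Qed.

End Estimator.

Theorem theorem3 (R : realType) (n J : nat) (blk : 'I_n -> 'I_J) (r : 'I_n -> R)
  (hr : forall i, 0 <= r i <= 1) (hsum : \sum_(i < n) r i = 1)
  (L : nat) (y : 'rV[R]_n) (hy : forall i, 0 <= y 0 i <= 1) :
  Num.sqrt (\sum_(i < n) (gradGz blk r y i - gradGz_hat blk r L y i) ^+ 2)
    <= Num.sqrt (n%:R) / ((L.+1)%:R * 2 ^+ L).
Proof.
apply: ler_sqrt_sum_sqr => [|i]; last exact: ler_norm_gradGz_sub_hat.
by rewrite invr_ge0 mulr_ge0 ?ler0n ?exprn_ge0.
Qed.
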